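(* Let $S$ be a 2-tangle and write its bracket expansion as $\langle S\rangle = \alpha_S\langle[0]\rangle + \beta_S\langle[\infty]\rangle$. Let $[1]$ denote the one-crossing tangle with $\langle[1]\rangle = A\langle[0]\rangle + A^{-1}\langle[\infty]\rangle$ and $[-1]$ its mirror image, and let $L = N(S+[1])$ and $L' = N(S+[-1])$, oriented (compatibly outside the crossing) so that the crossing of $L$ coming from $[1]$ is a negative crossing (so $w(L') = w(L)+2$). If $L$ and $L'$ have the same Jones polynomial, then $\alpha_S = 0$; that is, $\langle S\rangle = \kappa\langle[\infty]\rangle$ where $\kappa$ is defined by $\langle L\rangle = -A^{-3}\kappa$.
   Context: The bracket polynomial $\langle\cdot\rangle$ is the regular isotopy invariant of unoriented diagrams defined by $\langle \chi\rangle = A\langle \asymp\rangle + A^{-1}\langle >\!<\rangle$ and loop value $d=-A^2-A^{-2}$; the Jones polynomial is determined by $f_K(A) = (-A^3)^{-w(K)}\langle K\rangle$, with $w$ the writhe. A 2-tangle has exterior edges NW, NE, SW, SE. $[0]$ is the crossingless tangle joining NW–NE and SW–SE; $[\infty]$ joins NW–SW and NE–SE. Every tangle satisfies $\langle T\rangle = \alpha_T\langle[0]\rangle+\beta_T\langle[\infty]\rangle$ for well-defined Laurent polynomials $\alpha_T,\beta_T$. The sum $T+S$ attaches NE of $T$ to NW of $S$ and SE of $T$ to SW of $S$. The numerator $N(T)$ is the link obtained by joining NW to NE and SW to SE. *)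

From HB Require Import structures.
From mathcomp Require Import all_boot all_order all_algebra.
Set Implicit Arguments. Unset Strict Implicit. Unset Printing Implicit Defensive.
Import Order.TTheory GRing.Theory Num.Theory.
Local Open Scope ring_scope.

(* Coefficient ring: Laurent polynomials in A are represented inside   *)
(* the field of rational functions Q(A) = {fraction {poly int}}; the   *)
(* embedding Z[A,A^-1] -> Q(A) is injective.                           *)
Definition LF := {fraction {poly int}}.
Definition A : LF := tofrac ('X : {poly int}).
Definition dloop : LF := - A ^+ 2 - A ^- 2.

(* Diagrams as Morse words, read bottom to top.  At each level the     *)
(* strand endpoints are at positions 0,1,...,n-1 from left to right.   *)
(*  Cross i b : strands at positions i and i+1 cross (the strand from  *)
(*              bottom position i ends at top position i+1).           *)
(*              b = true : the strand going bottom-left -> top-right   *)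
(*              is the over strand; b = false : the strand going       *)
(*              bottom-right -> top-left is the over strand.           *)
(*  Cup i     : a local minimum inserting two new endpoints at i, i+1. *)
(*  Cap i     : a local maximum joining the endpoints at i and i+1.    *)
Inductive slice := Cross of nat & bool | Cup of nat | Cap of nat.

Definition slice_ok (s : slice) (n : nat) : option nat :=
  match s with
  | Cross i _ => if (i.+1 < n)%N then Some n else None
  | Cup i => if (i <= n)%N then Some n.+2 else None
  | Cap i => if (i.+1 < n)%N then Some n.-2 else None
  end.

Fixpoint word_ok (w : seq slice) (n : nat) : option nat :=
  match w with
  | [::] => Some n
  | s :: w' => match slice_ok s n with Some m => word_ok w' m | None => None end
  end.

(* A 2-tangle: bottom endpoints SW (0), SE (1); top endpoints NW (0),   *)
(* NE (1).  A link diagram: word from 0 to 0 endpoints.                 *)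
Definition is_tangle (w : seq slice) : Prop := word_ok w 2 = Some 2%N.

Definition shift_slice (k : nat) (s : slice) : slice :=
  match s with
  | Cross i b => Cross (k + i) b
  | Cup i => Cup (k + i)
  | Cap i => Cap (k + i)
  end.

Definition tzero : seq slice := [:: Cap 0; Cup 0].   (* [0]: NW-NE, SW-SE *)
Definition tinf  : seq slice := [::].                 (* [oo]: NW-SW, NE-SE *)
Definition tone  : seq slice := [:: Cross 0 false].
Definition tmone : seq slice := [:: Cross 0 true].

(* tangle sum T + S : NE of T attached to NW of S, SE of T to SW of S. *)
Definition tsum (T S : seq slice) : seq slice :=
  Cup 1 :: T ++ map (shift_slice 2) S ++ [:: Cap 1].

(* numerator N(T) : join NW to NE and SW to SE. *)
Definition numer (T : seq slice) : seq slice := Cup 0 :: T ++ [:: Cap 0].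

(* Bracket: state sum.  Kauffman's rule: the A-smoothing joins the two *)
(* regions swept when the over strand is rotated counterclockwise.     *)
(* For Cross i true that is the vertical smoothing (two straight       *)
(* strands), for Cross i false it is the horizontal smoothing (a cap   *)
(* followed by a cup at i).                                            *)
(* expand w lists, for every state, (A^{#A - #B}, smoothed diagram).   *)
Fixpoint expand (w : seq slice) : seq (LF * seq slice) :=
  match w with
  | [::] => [:: (1, [::])]
  | Cross i b :: w' =>
      let e := expand w' in
      if b then
        [seq (A * p.1, p.2) | p <- e] ++
        [seq (A^-1 * p.1, Cap i :: Cup i :: p.2) | p <- e]
      else
        [seq (A * p.1, Cap i :: Cup i :: p.2) | p <- e] ++
        [seq (A^-1 * p.1, p.2) | p <- e]
  | s :: w' => [seq (p.1, s :: p.2) | p <- expand w']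
  end.

(* Evaluation of a crossingless diagram.  At each level every endpoint  *)
(* records where its strand leads downwards: inl k = bottom endpoint k, *)
(* inr t = an endpoint of the current level carrying the same tag.     *)
(* The state also counts closed loops and holds a fresh-tag counter.    *)
Definition org := (nat + nat)%type.

Definition tl_step (s : slice) (st : seq org * nat * nat) : seq org * nat * nat :=
  let: (cur, loops, f) := st in
  match s with
  | Cup i => (take i cur ++ [:: inr f; inr f] ++ drop i cur, loops, f.+1)
  | Cap i =>
      let o1 := nth (inl 0%N) cur i in
      let o2 := nth (inl 0%N) cur i.+1 in
      let rest := take i cur ++ drop i.+2 cur in
      if o1 == o2 then (rest, loops.+1, f)
      else match o1, o2 with
           | inr _, _ => ([seq (if o == o1 then o2 else o) | o <- rest], loops, f)
           | _, inr _ => ([seq (if o == o2 then o1 else o) | o <- rest], loops, f)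
           | _, _ => (rest, loops, f)
           end
  | Cross _ _ => (cur, loops, f) (* never occurs after smoothing *)
  end.

Fixpoint tl_run (w : seq slice) (st : seq org * nat * nat) : seq org * nat * nat :=
  match w with
  | [::] => st
  | s :: w' => tl_run w' (tl_step s st)
  end.

(* Bracket of a link diagram, normalised by <O> = 1. *)
Definition bracket (L : seq slice) : LF :=
  \sum_(p <- expand L) p.1 * dloop ^+ (tl_run p.2 ([::], 0%N, 0%N)).1.2.-1.

Definition is_pat0 (cur : seq org) : bool :=
  match cur with [:: inr a; inr b] => a == b | _ => false end.
Definition is_patinf (cur : seq org) : bool := cur == [:: inl 0%N; inl 1%N].

(* <T> = alpha_T <[0]> + beta_T <[oo]> *)
Definition alpha (T : seq slice) : LF :=
  \sum_(p <- expand T)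
     let r := tl_run p.2 ([:: inl 0%N; inl 1%N], 0%N, 0%N) in
     if is_pat0 r.1.1 then p.1 * dloop ^+ r.1.2 else 0.
Definition beta (T : seq slice) : LF :=
  \sum_(p <- expand T)
     let r := tl_run p.2 ([:: inl 0%N; inl 1%N], 0%N, 0%N) in
     if is_patinf r.1.1 then p.1 * dloop ^+ r.1.2 else 0.

(* Orientations: at every level a direction (true = upward) for each   *)
(* endpoint, consistent along the strands.                             *)
Definition slice_orient_ok (s : slice) (o0 o1 : seq bool) : bool :=
  match s with
  | Cross i _ => (i.+1 < size o0)%N &&
      (o1 == take i o0 ++ [:: nth false o0 i.+1; nth false o0 i] ++ drop i.+2 o0)
  | Cup i => (i <= size o0)%N &&
      ((o1 == take i o0 ++ [:: true; false] ++ drop i o0) ||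
       (o1 == take i o0 ++ [:: false; true] ++ drop i o0))
  | Cap i => [&& (i.+1 < size o0)%N, nth false o0 i != nth false o0 i.+1 &
      (o1 == take i o0 ++ drop i.+2 o0)]
  end.

Fixpoint orient_ok (w : seq slice) (o0 : seq bool) (os : seq (seq bool)) : bool :=
  match w, os with
  | [::], [::] => true
  | s :: w', o1 :: os' => slice_orient_ok s o0 o1 && orient_ok w' o1 os'
  | _, _ => false
  end.

(* os = directions at the levels above slices 0,1,...; the bottom level *)
(* of a link diagram is empty.                                          *)
Definition link_orientation (L : seq slice) (os : seq (seq bool)) : bool :=
  orient_ok L [::] os.

(* Sign of the k-th slice (0 if it is not a crossing).  Cross i true   *)
(* with both strands upward is a positive crossing; reversing one      *)
(* strand changes the sign.                                             *)
Definition crossing_sign (L : seq slice) (os : seq (seq bool)) (k : nat) : int :=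
  match nth (Cup 0) L k with
  | Cross i b =>
      let lev := nth [::] ([::] :: os) k in
      if b == (nth false lev i == nth false lev i.+1) then 1 else -1
  | _ => 0
  end.

Definition writhe (L : seq slice) (os : seq (seq bool)) : int :=
  \sum_(k < size L) crossing_sign L os k.

Definition jones (L : seq slice) (os : seq (seq bool)) : LF :=
  (- A ^+ 3) ^ (- writhe L os) * bracket L.

(** Expanding the crossing of [±1] splits every state of S into two states of the
    link.  If the smoothed state of S connects its endpoints as [0], its closure has
    one loop more in the horizontal smoothing of the crossing than in the vertical
    one, and the other way round for [∞]; the kink identities A d + A^-1 = -A^3 and
    A + A^-1 d = -A^-3 then give <N(S + [1])> = -A^3 α - A^-3 β and
    <N(S + [-1])> = -A^-3 α - A^3 β.  The writhes differ by 2, so equal Jones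
    polynomials force (-A^3)^2 <N(S + [1])> = <N(S + [-1])>, i.e. α (A^12 - 1) = 0.

    The combinatorial core is that evaluating a crossingless state of S from its two
    bottom endpoints determines its evaluation inside the numerator closure.
    Planarity enters through a parity invariant: the two ends of every arc sit at
    positions of opposite parity, which rules out the connection NW–SE, NE–SW. *)

From mathcomp Require Import all_boot all_order all_algebra zify ring.
Set Implicit Arguments. Unset Strict Implicit. Unset Printing Implicit Defensive.
Import GRing.Theory.
Local Open Scope ring_scope.

Definition relabel (T : eqType) (o1 o2 o : T) : T := if o == o1 then o2 else o.

Fixpoint alt_count (T : eqType) (x : T) (s : seq T) : int :=
  if s is y :: s' then (y == x : nat)%:Z - alt_count x s' else 0.

Section Relabel.
Variable T : eqType.
Implicit Types (x y z : T) (s a b : seq T).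

Lemma alt_count_cat x a b : alt_count x (a ++ b) = alt_count x a + (-1) ^+ size a * alt_count x b.
Proof. by elim: a => [|y a IH] /=; rewrite ?add0r ?mul1r // IH exprS mulN1r opprD addrA mulNr. Qed.

Lemma count0_alt_count x s : count_mem x s = 0%N -> alt_count x s = 0.
Proof. by elim: s => [|y s IH] //=; case: (y == x) => // /IH ->. Qed.

Lemma count_cap x y z a b :
  count_mem z (a ++ x :: y :: b) = (count_mem z (a ++ b) + (x == z) + (y == z))%N.
Proof. rewrite !count_cat /=; lia. Qed.

Lemma alt_count_cap x y z a b : alt_count z (a ++ x :: y :: b) =
  alt_count z (a ++ b) + (-1) ^+ size a * ((x == z : nat)%:Z - (y == z : nat)%:Z).
Proof. rewrite !alt_count_cat /=; ring. Qed.

Lemma eqn_relabel (o1 o2 : T) x y : o1 != o2 ->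
  (relabel o1 o2 y == x : nat) =
  (if x == o1 then 0 else if x == o2 then (y == o2) + (y == o1) else (y == x : nat))%N.
Proof.
rewrite /relabel => n12.
have [->|nx1] := eqVneq x o1.
  by have [_|ny1] := eqVneq y o1; [rewrite eq_sym (negbTE n12) | rewrite (negbTE ny1)].
have [->|nx2] := eqVneq x o2.
  by have [->|ny1] := eqVneq y o1; rewrite ?eqxx ?(negbTE n12) ?(negbTE ny1) ?addn0.
by have [->|//] := eqVneq y o1; rewrite eq_sym (negbTE nx2) eq_sym (negbTE nx1).
Qed.

Lemma count_relabel (o1 o2 : T) x s : o1 != o2 ->
  count_mem x (map (relabel o1 o2) s) =
  (if x == o1 then 0 else if x == o2 then count_mem o2 s + count_mem o1 s else count_mem x s)%N.
Proof.
move=> n12; elim: s => [|y s IH] /=; first by do ?case: ifP.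
by rewrite eqn_relabel // IH; case: ifP => // _; case: ifP => // _; rewrite addnACA.
Qed.

Lemma alt_count_relabel (o1 o2 : T) x s : o1 != o2 ->
  alt_count x (map (relabel o1 o2) s) =
  (if x == o1 then 0 else if x == o2 then alt_count o2 s + alt_count o1 s else alt_count x s).
Proof.
move=> n12; elim: s => [|y s IH] /=; first by do ?case: ifP.
rewrite eqn_relabel // IH; case: ifP => _; first by rewrite subr0.
by case: ifP => // _; rewrite PoszD opprD addrACA.
Qed.

Lemma mem_count x s : (x \in s) = (0 < count_mem x s)%N.
Proof. by rewrite -has_pred1 has_count. Qed.

Lemma mem_relabel (o1 o2 : T) z s : z \in map (relabel o1 o2) s -> (z \in s) || (z == o2).
Proof. by case/mapP => y ys ->; rewrite /relabel; case: ifP; rewrite ?eqxx ?orbT ?ys. Qed.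

Lemma count_cap_relabel x y (o1 o2 : T) z a b :
  (x, y) = (o1, o2) \/ (x, y) = (o2, o1) -> o1 != o2 ->
  count_mem o1 (a ++ b) = 1%N -> alt_count o1 (a ++ x :: y :: b) = 0 -> z != o1 ->
  count_mem z (map (relabel o1 o2) (a ++ b)) = count_mem z (a ++ x :: y :: b) /\
  alt_count z (map (relabel o1 o2) (a ++ b)) = alt_count z (a ++ x :: y :: b).
Proof.
case=> -[-> ->] n12 c1 s1 nz1.
all: have n21 : (o2 == o1) = false by rewrite eq_sym (negbTE n12).
all: have z1 : (o1 == z) = false by rewrite eq_sym (negbTE nz1).
all: rewrite alt_count_cap eqxx n21 /= in s1.
all: rewrite count_relabel // alt_count_relabel // (negbTE nz1) count_cap alt_count_cap z1.
all: have [->|nz2] := eqVneq z o2; rewrite ?(negbTE n12) /=; split; first lia.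
all: by move/eqP: s1; rewrite addr_eq0 => /eqP s1; rewrite ?s1; ring.
Qed.

End Relabel.

Lemma map_relabel (T U : eqType) (g : T -> U) (o1 o2 : T) s :
  {in s, forall o, (g o == g o1) = (o == o1)} ->
  map g (map (relabel o1 o2) s) = map (relabel (g o1) (g o2)) (map g s).
Proof.
move=> gK; rewrite -!map_comp; apply/eq_in_map => o os /=.
by rewrite /relabel gK //; case: ifP.
Qed.

Lemma eq_big_all {R : Type} {idx : R} {op : R -> R -> R} {I : Type} (r : seq I) (P : pred I)
    (F1 F2 : I -> R) :
  all P r -> (forall i, P i -> F1 i = F2 i) ->
  \big[op/idx]_(i <- r) F1 i = \big[op/idx]_(i <- r) F2 i.
Proof.
move=> + eqF; elim: r => [|i r IH] /=; first by rewrite !big_nil.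
by case/andP=> Pi /IH; rewrite !big_cons eqF // => ->.
Qed.

Lemma cat_split2 (T : Type) (c : seq T) i : (i.+1 < size c)%N ->
  exists a x y b, c = a ++ x :: y :: b /\ size a = i.
Proof.
elim: c i => [|z c IH] [|i] //=.
  by case: c IH => [|y b] //= _ _; exists [::], z, y, b.
by move=> /IH [a [x [y [b [-> <-]]]]]; exists (z :: a), x, y, b.
Qed.

(** * Crossingless diagrams *)

Local Notation config := (seq org * nat * nat)%type.

Lemma tl_run_cat w1 w2 st : tl_run (w1 ++ w2) st = tl_run w2 (tl_run w1 st).
Proof. by elim: w1 st => [|s w IH] st //=. Qed.

Lemma tl_step_cap a x y b l f :
  tl_step (Cap (size a)) (a ++ x :: y :: b, l, f) =
  if x == y then (a ++ b, l.+1, f) else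
  match x, y with
  | inr _, _ => (map (relabel x y) (a ++ b), l, f)
  | _, inr _ => (map (relabel y x) (a ++ b), l, f)
  | _, _ => (a ++ b, l, f)
  end.
Proof.
have [nth_x nth_y drop_b] : [/\ nth (inl 0%N) (a ++ x :: y :: b) (size a) = x,
    nth (inl 0%N) (a ++ x :: y :: b) (size a).+1 = y & drop (size a).+2 (a ++ x :: y :: b) = b].
  by elim: a => [|z a IH] //=; rewrite drop0.
by rewrite /tl_step nth_x nth_y drop_b take_size_cat.
Qed.

Lemma tl_step_cup a b l f :
  tl_step (Cup (size a)) (a ++ b, l, f) = (a ++ inr f :: inr f :: b, l, f.+1).
Proof. by rewrite /tl_step take_size_cat // drop_size_cat. Qed.

Arguments tl_step : simpl never.

Lemma size_tl_step_cap a x y b l f :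
  size (tl_step (Cap (size a)) (a ++ x :: y :: b, l, f)).1.1 = size (a ++ b).
Proof.
rewrite tl_step_cap; case: ifP => _ //.
by case: x => [?|?]; [case: y => [?|?]|]; rewrite /= ?size_map.
Qed.

Lemma mem_cap (z x y : org) a b : z \in a ++ b -> z \in a ++ x :: y :: b.
Proof. by rewrite !mem_cat !in_cons => /orP[] ->; rewrite ?orbT. Qed.

Lemma eq_inl (k j : nat) : (inl k == inl j :> org) = (k == j).
Proof. by []. Qed.

Definition nocross (w : seq slice) : bool :=
  all (fun s => if s is Cross _ _ then false else true) w.

(* Bottom endpoint 0 can only occupy an even position and endpoint 1 an odd one
   (recorded by the alternating count), and an arc occupies two positions of
   opposite parity. *)
Definition label_ok (x : org) (n : nat) (z : int) : Prop :=
  match x with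
  | inl 0 => (n <= 1)%N /\ z = n%:Z
  | inl 1 => (n <= 1)%N /\ z = - n%:Z
  | inl _ => n = 0%N
  | inr _ => ((n == 0%N) || (n == 2%N)) /\ z = 0
  end.

Definition wf_config (c : seq org) (f : nat) : Prop :=
  (forall x, label_ok x (count_mem x c) (alt_count x c)) /\
  (forall t, inr t \in c -> (t < f)%N).

Lemma label_ok0 x : label_ok x 0 0.
Proof. by case: x => [[|[|k]]|t]. Qed.

Lemma label_ok_count0 x s : count_mem x s = 0%N -> label_ok x (count_mem x s) (alt_count x s).
Proof. by move=> c0; rewrite count0_alt_count // c0; apply: label_ok0. Qed.

Lemma label_ok_sub2 x n z : label_ok x (n + 2) z -> label_ok x n z.
Proof. by case: x => [[|[|k]]|t] /=; lia. Qed.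

Lemma label_ok_inl k n z : label_ok (inl k) n.+1 z -> n = 0%N.
Proof. by case: k => [|[|k]] /=; lia. Qed.

Lemma label_ok_inr t n z : label_ok (inr t) n.+1 z -> n = 1%N /\ z = 0.
Proof. by case=> /orP[] /eqP nt ->; split; lia. Qed.

Lemma wf_cup a b f : wf_config (a ++ b) f -> wf_config (a ++ inr f :: inr f :: b) f.+1.
Proof.
case=> ok fresh; have nf : count_mem (inr f) (a ++ b) = 0%N.
  by apply/count_memPn/negP => /fresh; rewrite ltnn.
split=> [z|t]; first rewrite count_cap alt_count_cap subrr mulr0 addr0.
  have [->|nzf] := eqVneq z (inr f); last by rewrite !addn0.
  by rewrite nf count0_alt_count.
rewrite mem_cat !in_cons => /or3P[ta|/eqP[->]|/orP[/eqP[->]|tb]] //.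
- by apply/ltnW/fresh; rewrite mem_cat ta.
- by apply/ltnW/fresh; rewrite mem_cat tb orbT.
Qed.

Lemma wf_cap_loop a x b f : wf_config (a ++ x :: x :: b) f -> wf_config (a ++ b) f.
Proof.
case=> ok fresh; split=> [z|t /mem_cap/fresh //].
have := ok z; rewrite count_cap alt_count_cap subrr mulr0 addr0.
have [->|nzx] := eqVneq z x; first by rewrite -addnA; apply: label_ok_sub2.
by rewrite !addn0.
Qed.

Lemma wf_cap_ends a (k j : nat) b f : k != j ->
  wf_config (a ++ inl k :: inl j :: b) f -> wf_config (a ++ b) f.
Proof.
move=> nkj [ok fresh]; split=> [z|t /mem_cap/fresh //].
have := ok z; rewrite count_cap alt_count_cap.
have [->|nzk] := eqVneq z (inl k).
  by rewrite eq_inl eq_sym (negbTE nkj) addn0 addn1 => /label_ok_inl /label_ok_count0.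
have [->|nzj] := eqVneq z (inl j); first by rewrite addn0 addn1 => /label_ok_inl /label_ok_count0.
by rewrite subrr mulr0 addr0 !addn0.
Qed.

Lemma count_cap_arc a x y b f t o z :
  (x, y) = (inr t, o) \/ (x, y) = (o, inr t) -> inr t != o ->
  wf_config (a ++ x :: y :: b) f -> z != inr t ->
  count_mem z (map (relabel (inr t) o) (a ++ b)) = count_mem z (a ++ x :: y :: b) /\
  alt_count z (map (relabel (inr t) o) (a ++ b)) = alt_count z (a ++ x :: y :: b).
Proof.
move=> exy nto [ok _] nzt.
have [ct st] : count_mem (inr t) (a ++ b) = 1%N /\ alt_count (inr t) (a ++ x :: y :: b) = 0.
  have := ok (inr t); rewrite [count_mem _ (_ ++ x :: _)]count_cap.
  by case: exy => -[-> ->]; rewrite eqxx eq_sym (negbTE nto) ?addn0 addn1 => /label_ok_inr.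
exact: count_cap_relabel.
Qed.

Lemma wf_cap_relabel a x y b f t o :
  (x, y) = (inr t, o) \/ (x, y) = (o, inr t) -> inr t != o ->
  wf_config (a ++ x :: y :: b) f -> wf_config (map (relabel (inr t) o) (a ++ b)) f.
Proof.
move=> exy nto wf; have [ok fresh] := wf; split=> [z|v].
  have [->|nzt] := eqVneq z (inr t).
    by rewrite count_relabel // alt_count_relabel // eqxx; apply: label_ok0.
  by have [-> ->] := count_cap_arc exy nto wf nzt; apply: ok.
case/mem_relabel/orP => [/mem_cap/fresh //|/eqP ov]; apply: fresh.
by case: exy => -[-> ->]; rewrite -ov mem_cat !in_cons eqxx ?orbT.
Qed.

(** * The numerator closure of a crossingless tangle *)

(* After [Cup 0; Cup 1] the closure has ends [inr 0; inr 1; inr 1; inr 0]: positions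
   0, 1 are the bottom endpoints of S, positions 2, 3 the arcs closing them up.  A
   configuration [c] of S corresponds to [map (close_label x0 x1) c ++ [:: inr x1; inr x0]]:
   tags of S are shifted by 2, and [xk] is the tag of the closing arc at bottom
   endpoint [k].  Once S joins its two bottom endpoints these arcs merge, so [x0 = x1]. *)
Definition close_label (x0 x1 : nat) (o : org) : org :=
  match o with inl k => inr (if k == 0%N then x0 else x1) | inr t => inr t.+2 end.

Definition tags_avoid (c : seq org) (x0 x1 : nat) : Prop :=
  forall t, inr t \in c -> t.+2 != x0 /\ t.+2 != x1.

Definition ends_ok (c : seq org) (x0 x1 : nat) : Prop :=
  [/\ count_mem (inl 0%N) c = 1%N, count_mem (inl 1%N) c = 1%N & x0 != x1] \/
  [/\ count_mem (inl 0%N) c = 0%N, count_mem (inl 1%N) c = 0%N & x0 = x1].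

Definition closure_inv (c : seq org) (f x0 x1 : nat) : Prop :=
  [/\ wf_config c f, tags_avoid c x0 x1, ends_ok c x0 x1 & (x0 < f.+2)%N /\ (x1 < f.+2)%N].

Definition close_config (x0 x1 : nat) (st : config) : config :=
  (map (close_label x0 x1) st.1.1 ++ [:: inr x1; inr x0], st.1.2, st.2.+2).

Definition closure_of (st st' : config) : Prop :=
  exists x0 x1, closure_inv st.1.1 st.2 x0 x1 /\ st' = close_config x0 x1 st.

Lemma inl_le1 c f k : wf_config c f -> inl k \in c -> (k <= 1)%N.
Proof.
by case=> ok _; rewrite mem_count; move: (ok (inl k)); case: k => [|[|k]] //= ->.
Qed.

Lemma wf_no_ends c f k : wf_config c f ->
  count_mem (inl 0%N) c = 0%N -> count_mem (inl 1%N) c = 0%N -> inl k \notin c.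
Proof.
move=> wf c0 c1; apply/negP => kc; have := inl_le1 wf kc; move: kc.
by rewrite mem_count; case: k => [|[|k]] //; rewrite ?c0 ?c1.
Qed.

Lemma ends_open c f x0 x1 k : wf_config c f -> ends_ok c x0 x1 -> inl k \in c ->
  [/\ count_mem (inl 0%N) c = 1%N, count_mem (inl 1%N) c = 1%N & x0 != x1].
Proof. by move=> wf [//|[c0 c1 _]]; rewrite (negbTE (wf_no_ends k wf c0 c1)). Qed.

Lemma close_label_eq c f x0 x1 o o' : wf_config c f -> tags_avoid c x0 x1 -> ends_ok c x0 x1 ->
  o \in c -> o' \in c -> (close_label x0 x1 o == close_label x0 x1 o') = (o == o').
Proof.
move=> wf avoid ends; case: o => [k|t] oc; case: o' => [k'|t'] o'c; rewrite -!sum_eqE /=.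
- have [_ _ n01] := ends_open wf ends oc.
  have := inl_le1 wf oc; have := inl_le1 wf o'c.
  case: k {oc} => [|[|k]] //; case: k' {o'c} => [|[|k']] //= _ _;
    by rewrite ?eqxx // ?(negbTE n01) // eq_sym (negbTE n01).
- by have [n0 n1] := avoid _ o'c; case: (k == 0%N); rewrite eq_sym ?(negbTE n0) ?(negbTE n1).
- by have [n0 n1] := avoid _ oc; case: (k' == 0%N); rewrite ?(negbTE n0) ?(negbTE n1).
- exact: eqSS.
Qed.

Lemma ends_ok_count c c' x0 x1 :
  count_mem (inl 0%N) c' = count_mem (inl 0%N) c ->
  count_mem (inl 1%N) c' = count_mem (inl 1%N) c ->
  ends_ok c x0 x1 -> ends_ok c' x0 x1.
Proof. by rewrite /ends_ok => -> ->. Qed.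

Section CapClosure.
Variables (a b : seq org) (l f x0 x1 : nat).
Local Notation phi := (close_label x0 x1).
Local Notation tail := [:: inr x1; inr x0].

Lemma closure_cap_loop x : closure_inv (a ++ x :: x :: b) f x0 x1 ->
  closure_of (a ++ b, l.+1, f) (map phi (a ++ b) ++ tail, l.+1, f.+2).
Proof.
case=> wf avoid ends bnd; case: x wf avoid ends => [k|t] wf avoid ends.
  by have := wf.1 (inl k); rewrite count_cap eqxx addn1 => /label_ok_inl; rewrite addn1.
exists x0, x1; split=> //; split=> //=; first exact: wf_cap_loop wf.
  by move=> v /mem_cap vc; apply: avoid _ (vc _ _).
by apply: ends_ok_count ends; rewrite count_cap -!sum_eqE /= !addn0.
Qed.

Lemma closure_cap_arc (t : nat) y : inr t != y -> closure_inv (a ++ inr t :: y :: b) f x0 x1 ->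
  closure_of (map (relabel (inr t) y) (a ++ b), l, f)
    (map (relabel (inr t.+2) (phi y)) (map phi (a ++ b) ++ tail), l, f.+2).
Proof.
move=> nty [wf avoid ends bnd].
have tc : inr t \in a ++ inr t :: y :: b by rewrite mem_cat mem_head orbT.
have arc z := count_cap_arc (or_introl erefl) nty wf (z := z).
exists x0, x1; split; first split=> //=.
- exact: wf_cap_relabel (or_introl erefl) nty wf.
- move=> v /mem_relabel /orP[/mem_cap vc|/eqP vy]; first exact: avoid _ (vc _ _).
  by apply: avoid; rewrite vy mem_cat !in_cons eqxx !orbT.
- by apply: ends_ok_count ends; [have [] := arc (inl 0%N) | have [] := arc (inl 1%N)].
rewrite /close_config /= (map_relabel (g := phi)); last first.
  by move=> o /mem_cap oc; apply: close_label_eq wf avoid ends (oc _ _) tc.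
have [n0 n1] := avoid t tc.
by rewrite (map_cat (relabel _ _)) /= /relabel -!sum_eqE /= eq_sym (negbTE n1) eq_sym (negbTE n0).
Qed.

Lemma closure_cap_end_arc (k u : nat) : closure_inv (a ++ inl k :: inr u :: b) f x0 x1 ->
  closure_of (map (relabel (inr u) (inl k)) (a ++ b), l, f)
    (map (relabel (phi (inl k)) (inr u.+2)) (map phi (a ++ b) ++ tail), l, f.+2).
Proof.
move=> [wf avoid ends bnd].
have kc : inl k \in a ++ inl k :: inr u :: b by rewrite mem_cat mem_head orbT.
have uc : inr u \in a ++ inl k :: inr u :: b by rewrite mem_cat !in_cons eqxx !orbT.
have nuk : inr u != inl k by [].
have arc z := count_cap_arc (or_intror erefl) nuk wf (z := z).
have [c0 c1 n01] := ends_open wf ends kc.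
have [u0 u1] := avoid u uc; have uf := wf.2 u uc.
have ck : count_mem (inl k) (a ++ b) = 0%N.
  by have := wf.1 (inl k); rewrite count_cap eqxx addn0 addn1 => /label_ok_inl.
have k1 := inl_le1 wf kc.
exists (if k == 0%N then u.+2 else x0), (if k == 0%N then x1 else u.+2); split; first split.
- exact: wf_cap_relabel (or_intror erefl) nuk wf.
- move=> v vn; have vu : v != u.
    by apply: contraTneq vn => ->; rewrite mem_count count_relabel // eqxx.
  case/mem_relabel/orP: vn => [/mem_cap vc|//]; have [v0 v1] := avoid v (vc _ _).
  by case: (k == 0%N); rewrite /= ?eqSS; split.
- left; have [-> _] := arc (inl 0%N) isT; have [-> _] := arc (inl 1%N) isT.
  rewrite !count_cap -!sum_eqE /= in c0 c1 *; rewrite c0 c1; split=> //.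
  by case: (k == 0%N); rewrite // eq_sym.
- by move: bnd => [? ?]; case: (k == 0%N) => /=; lia.
rewrite /close_config /= (map_cat (relabel _ _)); congr (_ ++ _, _, _).
  rewrite -!map_comp; apply/eq_in_map => o or /=.
  have oc := mem_cap (inl k) (inr u) or.
  rewrite /relabel (close_label_eq wf avoid ends oc kc).
  have nok : o != inl k by apply: contraTneq or => ->; rewrite mem_count ck.
  rewrite (negbTE nok); have [->|nou] := eqVneq o (inr u); first by rewrite /=; case: (k == 0%N).
  case: o or oc nou nok => [k'|v] // _ oc _ nk; rewrite -sum_eqE /= in nk.
  have := inl_le1 wf oc; case: k' {oc} nk => [|[|k']] // nk _ /=.
    by rewrite eq_sym (negbTE nk).
  by have -> : k == 0%N by lia.
rewrite /relabel -!sum_eqE /=.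
by case: (k == 0%N); rewrite eqxx ?(negbTE n01) // eq_sym (negbTE n01).
Qed.

Lemma closure_cap_ends (k j : nat) : k != j -> closure_inv (a ++ inl k :: inl j :: b) f x0 x1 ->
  closure_of (a ++ b, l, f)
    (map (relabel (phi (inl k)) (phi (inl j))) (map phi (a ++ b) ++ tail), l, f.+2).
Proof.
move=> nkj [wf avoid ends bnd].
have kc : inl k \in a ++ inl k :: inl j :: b by rewrite mem_cat mem_head orbT.
have jc : inl j \in a ++ inl k :: inl j :: b by rewrite mem_cat !in_cons eqxx !orbT.
have [c0 c1 n01] := ends_open wf ends kc.
have k1 := inl_le1 wf kc; have j1 := inl_le1 wf jc.
have [r0 r1 jk] : [/\ count_mem (inl 0%N) (a ++ b) = 0%N, count_mem (inl 1%N) (a ++ b) = 0%N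
    & (j == 0%N) = (k != 0%N)].
  move: c0 c1; rewrite !count_cap !eq_inl.
  by set C0 := count_mem (inl 0%N) _; set C1 := count_mem (inl 1%N) _; split; lia.
exists (if j == 0%N then x0 else x1), (if j == 0%N then x0 else x1); split; first split.
- exact: wf_cap_ends nkj wf.
- by move=> v /mem_cap vc; have [v0 v1] := avoid v (vc _ _); case: ifP.
- by right.
- by case: bnd => ? ?; case: ifP.
rewrite /close_config /= (map_cat (relabel _ _)) -map_comp; congr (_ ++ _, _, _).
  apply/eq_in_map => -[k'|v] or /=.
    by have := wf_no_ends k' (wf_cap_ends nkj wf) r0 r1; rewrite or.
  have [v0 v1] := avoid v (mem_cap (inl k) (inl j) or).
  by rewrite /relabel -sum_eqE /=; case: (k == 0%N); rewrite ?(negbTE v0) ?(negbTE v1).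
rewrite jk /relabel -!sum_eqE /=.
by case: (k == 0%N); rewrite eqxx ?(negbTE n01) // eq_sym (negbTE n01).
Qed.

End CapClosure.

Lemma closure_cup a b l f st' : closure_of (a ++ b, l, f) st' ->
  closure_of (tl_step (Cup (size a)) (a ++ b, l, f)) (tl_step (Cup (size a)) st').
Proof.
case=> x0 [x1 [[wf avoid ends [b0 b1]] ->]].
rewrite tl_step_cup /close_config /= map_cat -catA -(size_map (close_label x0 x1) a) tl_step_cup.
exists x0, x1; split; last by rewrite /close_config /= map_cat -catA.
split=> //=; first exact: wf_cup.
- move=> t; rewrite mem_cat !in_cons => /or3P[ta|/eqP[->]|/orP[/eqP[->]|tb]].
  + by apply: avoid; rewrite mem_cat ta.
  + by rewrite !neq_ltn b0 b1 !orbT.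
  + by rewrite !neq_ltn b0 b1 !orbT.
  + by apply: avoid; rewrite mem_cat tb orbT.
- by apply: ends_ok_count ends; rewrite count_cap /= !addn0.
- by move: b0 b1 => /= ? ?; split; lia.
Qed.

Lemma closure_cap a x y b l f st' : closure_of (a ++ x :: y :: b, l, f) st' ->
  closure_of (tl_step (Cap (size a)) (a ++ x :: y :: b, l, f)) (tl_step (Cap (size a)) st').
Proof.
case=> x0 [x1 [inv ->]]; have [wf avoid ends _] := inv.
have xc : x \in a ++ x :: y :: b by rewrite mem_cat mem_head orbT.
have yc : y \in a ++ x :: y :: b by rewrite mem_cat !in_cons eqxx !orbT.
rewrite tl_step_cap /close_config /= map_cat -catA -(size_map (close_label x0 x1) a) /= tl_step_cap.
rewrite (close_label_eq wf avoid ends xc yc) catA -map_cat.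
have [exy|nxy] := eqVneq x y; first by rewrite -exy in inv; apply: closure_cap_loop inv.
case: x y nxy {xc yc wf avoid ends} inv => [k|t] [j|u] nxy inv /=.
- by apply: closure_cap_ends inv; rewrite -eq_inl.
- exact: closure_cap_end_arc.
- exact: closure_cap_arc.
- exact: closure_cap_arc.
Qed.

Lemma closure_run w n m st st' : word_ok w n = Some m -> nocross w ->
  size st.1.1 = n -> closure_of st st' ->
  closure_of (tl_run w st) (tl_run w st') /\ size (tl_run w st).1.1 = m.
Proof.
elim: w n st st' => [|s w IH] n [[c l] f] st' /=; first by case=> <- _ ->.
case: s => [i b|i|i] //=; case: ifP => // hi hw nc sc cl.
- rewrite -sc in hi; have [a [b' [ec ea]]] : exists a b', c = a ++ b' /\ size a = i.
    by exists (take i c), (drop i c); rewrite cat_take_drop size_takel.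
  subst c i; apply: (IH n.+2) => //; last exact: closure_cup.
  by rewrite tl_step_cup -sc !size_cat /= !addnS.
- rewrite -sc in hi; have [a [x [y [b' [ec ea]]]]] := cat_split2 hi.
  subst c i; apply: (IH n.-2) => //; last exact: closure_cap.
  by rewrite size_tl_step_cap -sc !size_cat /= !addnS.
Qed.

Lemma closure_start :
  closure_of ([:: inl 0%N; inl 1%N], 0%N, 0%N) (tl_run [:: Cup 0; Cup 1] ([::], 0%N, 0%N)).
Proof.
exists 0%N, 1%N; split=> //; split=> //; last by left.
by split=> [[[|[|k]]|t]|t] //; rewrite !in_cons.
Qed.

Lemma closure_final c l f st' : closure_of (c, l, f) st' -> size c = 2%N ->
  exists p g, [/\ p != g, (p < f.+2)%N, (g < f.+2)%N &
    (is_pat0 c /\ st' = ([:: inr p; inr p; inr g; inr g], l, f.+2)) \/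
    (is_patinf c /\ st' = ([:: inr p; inr g; inr g; inr p], l, f.+2))].
Proof.
case=> x0 [x1 [[wf avoid ends [b0 b1]] ->]]; rewrite /= in b0 b1 *.
case: c wf avoid ends => [|o1 [|o2 []]] // wf avoid [[c0 c1 n01]|[c0 c1 <-]] _.
  exists x0, x1; split=> //; right.
  move: (wf.1 (inl 0%N)) c0 c1 => /=.
  by case: o1 o2 {wf avoid} => [[|[|k1]]|t1] [[|[|k2]]|t2] //= [].
case: o1 o2 wf avoid c0 c1 => [k1|t] [k2|u] wf avoid c0 c1.
- by have := wf_no_ends k1 wf c0 c1; rewrite mem_head.
- by have := wf_no_ends k1 wf c0 c1; rewrite mem_head.
- by have := wf_no_ends k2 wf c0 c1; rewrite !in_cons eqxx orbT.
have := wf.1 (inr t); rewrite /= eqxx; case: (eqVneq (inr u) (inr t)) => [[->] _|_ /= []//].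
have [t0 _] := avoid t (mem_head _ _); have ft := wf.2 t (mem_head _ _).
by exists t.+2, x0; split=> //; left; rewrite eqxx.
Qed.

Definition horizontal_closing : seq slice := [:: Cap 2; Cup 2; Cap 1; Cap 0].

Definition vertical_closing : seq slice := [:: Cap 1; Cap 0].

Lemma loops_closing_pat0 p g l F : p != g -> (p < F)%N -> (g < F)%N ->
  (tl_run horizontal_closing ([:: inr p; inr p; inr g; inr g], l, F)).1.2 = l.+2 /\
  (tl_run vertical_closing ([:: inr p; inr p; inr g; inr g], l, F)).1.2 = l.+1.
Proof.
move=> npg pF gF; have pF' : p != F by rewrite neq_ltn pF.
rewrite /tl_run /tl_step -!sum_eqE.
by do 6 rewrite /= ?eqxx ?(negbTE npg) ?(negbTE pF') ?if_same.
Qed.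

Lemma loops_closing_patinf p g l F : p != g -> (p < F)%N -> (g < F)%N ->
  (tl_run horizontal_closing ([:: inr p; inr g; inr g; inr p], l, F)).1.2 = l.+1 /\
  (tl_run vertical_closing ([:: inr p; inr g; inr g; inr p], l, F)).1.2 = l.+2.
Proof.
move=> npg pF gF; have pF' : p != F by rewrite neq_ltn pF.
rewrite eq_sym in npg; rewrite /tl_run /tl_step -!sum_eqE.
by do 6 rewrite /= ?eqxx ?(negbTE npg) ?(negbTE pF') ?if_same.
Qed.

Lemma numer_state_loops w c n f : word_ok w 2 = Some 2%N -> nocross w ->
  tl_run w ([:: inl 0%N; inl 1%N], 0%N, 0%N) = (c, n, f) ->
  let loops v := (tl_run ([:: Cup 0; Cup 1] ++ w ++ v) ([::], 0%N, 0%N)).1.2 in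
  (is_pat0 c /\ loops horizontal_closing = n.+2 /\ loops vertical_closing = n.+1) \/
  (is_patinf c /\ loops horizontal_closing = n.+1 /\ loops vertical_closing = n.+2).
Proof.
move=> ow nc run loops; rewrite /loops !tl_run_cat.
have [] := closure_run (st := ([:: inl 0%N; inl 1%N], 0%N, 0%N)) ow nc erefl closure_start.
rewrite run => cl sz.
have [p [g [npg pF gF [[pat ->]|[pat ->]]]]] := closure_final cl sz.
  by left; split=> //; apply: loops_closing_pat0.
by right; split=> //; apply: loops_closing_patinf.
Qed.

(** * The bracket and the Jones polynomial of N(S ± [1]) *)

Lemma big_expand_cat (w1 w2 : seq slice) (G : seq slice -> LF) :
  \sum_(p <- expand (w1 ++ w2)) p.1 * G p.2 =
  \sum_(p <- expand w1) \sum_(q <- expand w2) p.1 * q.1 * G (p.2 ++ q.2).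
Proof.
elim: w1 G => [|s w1 IH] G /=.
  by rewrite big_seq1; apply: eq_bigr => q _; rewrite mul1r.
have scaled c pre : \sum_(p <- expand (w1 ++ w2)) c * p.1 * G (pre ++ p.2) =
    \sum_(p <- expand w1) \sum_(q <- expand w2) c * p.1 * q.1 * G ((pre ++ p.2) ++ q.2).
  under eq_bigr do rewrite -mulrA.
  rewrite -mulr_sumr (IH (fun w => G (pre ++ w))) mulr_sumr.
  by apply: eq_bigr => p _; rewrite mulr_sumr; apply: eq_bigr => q _; rewrite !mulrA catA.
case: s => [i b|i|i] /=.
- by case: b; rewrite !big_cat !big_map /= (scaled _ [::]) (scaled _ [:: Cap i; Cup i]).
- by rewrite !big_map (IH (fun w => G (Cup i :: w))).
- by rewrite !big_map (IH (fun w => G (Cap i :: w))).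
Qed.

Lemma expand_smooth w n m : word_ok w n = Some m ->
  all (fun p => (word_ok p.2 n == Some m) && nocross p.2) (expand w).
Proof.
elim: w n => [|s w IH] n /=; first by case=> ->; rewrite eqxx.
case: s => [i b|i|i] /=; case: ifP => // hi /IH ok_w; last 2 first.
- by rewrite all_map; apply: sub_all ok_w => p /=; rewrite hi.
- by rewrite all_map; apply: sub_all ok_w => p /=; rewrite hi.
have i_le : (i <= n.-2)%N by lia.
have n_eq : n.-2.+2 = n by lia.
by case: b; rewrite all_cat !all_map; apply/andP; split; apply: sub_all ok_w => p //=;
  rewrite hi i_le n_eq.
Qed.

Lemma A_neq0 : A != 0.
Proof. by rewrite tofrac_eq0 polyX_eq0. Qed.

Lemma kink_identities (F : fieldType) (a : F) : a != 0 ->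
  a * (- a ^+ 2 - a ^- 2) + a^-1 = - a ^+ 3 /\ a + a^-1 * (- a ^+ 2 - a ^- 2) = - a ^- 3.
Proof. by move=> a0; split; field. Qed.

Lemma extra_loop_A (q : LF) n :
  q * (A * 1) * dloop ^+ n.+1 + q * (A^-1 * 1) * dloop ^+ n = - A ^+ 3 * (q * dloop ^+ n).
Proof.
rewrite -(kink_identities A_neq0).1 exprS -/dloop.
by move: (dloop ^+ n) => D; ring.
Qed.

Lemma extra_loop_Ainv (q : LF) n :
  q * (A * 1) * dloop ^+ n + q * (A^-1 * 1) * dloop ^+ n.+1 = - A ^- 3 * (q * dloop ^+ n).
Proof.
rewrite -(kink_identities A_neq0).2 exprS -/dloop.
by move: (dloop ^+ n) => D; ring.
Qed.

Lemma is_pat0_patinf c : is_pat0 c -> is_patinf c = false.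
Proof. by case: c => [|[?|?] [|[?|?] []]]. Qed.

Lemma is_patinf_pat0 c : is_patinf c -> is_pat0 c = false.
Proof. by case: c => [|[?|?] [|[?|?] []]]. Qed.

Lemma numer_tsum_cross S b :
  numer (tsum S [:: Cross 0 b]) = ([:: Cup 0; Cup 1] ++ S) ++ [:: Cross 2 b; Cap 1; Cap 0].
Proof. by rewrite /numer /tsum /= -catA. Qed.

Lemma bracket_numer_cross S b : is_tangle S ->
  bracket (numer (tsum S [:: Cross 0 b])) =
  if b then - A ^- 3 * alpha S - A ^+ 3 * beta S else - A ^+ 3 * alpha S - A ^- 3 * beta S.
Proof.
move=> tS; rewrite numer_tsum_cross -catA /bracket.
rewrite (big_expand_cat _ _ (fun w => dloop ^+ (tl_run w ([::], 0%N, 0%N)).1.2.-1)) /= big_seq1.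
under eq_bigr do rewrite mul1r.
rewrite (big_expand_cat S _
  (fun w => dloop ^+ (tl_run ([:: Cup 0; Cup 1] ++ w) ([::], 0%N, 0%N)).1.2.-1)).
case: b; rewrite /alpha /beta !mulr_sumr -sumrB; apply: (eq_big_all (expand_smooth tS)) => p.
all: case/andP=> /eqP ow nc; case run: (tl_run p.2 _) => [[c n] f] /=.
all: have [[pat [hor ver]]|[pat [hor ver]]] := numer_state_loops ow nc run.
all: rewrite /= in hor ver; rewrite big_cons big_seq1 /= hor ver /=.
all: rewrite pat ?(is_pat0_patinf pat) ?(is_patinf_pat0 pat).
all: by rewrite ?extra_loop_A ?extra_loop_Ainv ?mulr0 ?subr0 ?sub0r ?mulNr.
Qed.

Lemma A_exp12_neq1 : A ^+ 12 != 1.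
Proof.
rewrite -tofracXn -tofrac1 tofrac_eq; apply/eqP => h.
by have := size_polyXn int 12; rewrite h size_poly1.
Qed.

Lemma alpha0_of_equal_jones (F : fieldType) (a al be : F) (w : int) : a != 0 -> a ^+ 12 != 1 ->
  (- a ^+ 3) ^ (- w) * (- a ^+ 3 * al - a ^- 3 * be) =
  (- a ^+ 3) ^ (- (w + 2)) * (- a ^- 3 * al - a ^+ 3 * be) -> al = 0.
Proof.
move=> a0 a12; have u0 : - a ^+ 3 != 0 by rewrite oppr_eq0 expf_neq0.
rewrite opprD expfzDr // -mulrA => /(mulfI (expfz_neq0 _ u0)) e.
have {}e : (- a ^+ 3) ^+ 2 * (- a ^+ 3 * al - a ^- 3 * be) = - a ^- 3 * al - a ^+ 3 * be.
  by rewrite e mulrA -[(- a ^+ 3) ^ _]/(((- a ^+ 3) ^+ 2)^-1) mulfV ?mul1r ?expf_neq0.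
have : al * (1 - a ^+ 12) =
    a ^+ 3 * ((- a ^+ 3) ^+ 2 * (- a ^+ 3 * al - a ^- 3 * be) - (- a ^- 3 * al - a ^+ 3 * be)).
  by field.
rewrite e subrr mulr0 => /eqP; rewrite mulf_eq0 subr_eq0 [1 == _]eq_sym (negbTE a12) orbF.
by move/eqP.
Qed.

Lemma nth_cat_cons_neq (T : Type) (d : T) u x y v k : k != size u ->
  nth d (u ++ x :: v) k = nth d (u ++ y :: v) k.
Proof.
move=> nk; rewrite !nth_cat; case: ltnP => // le_uk.
by have -> : (k - size u = (k - size u).-1.+1)%N by lia.
Qed.

Lemma crossing_sign_flip u v i b os :
  crossing_sign (u ++ Cross i (~~ b) :: v) os (size u) =
  - crossing_sign (u ++ Cross i b :: v) os (size u).
Proof.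
rewrite /crossing_sign !nth_cat ltnn subnn /=.
by case: b; case: (nth false _ i == _); rewrite ?opprK.
Qed.

Lemma writhe_flip u v i b os :
  writhe (u ++ Cross i (~~ b) :: v) os =
  writhe (u ++ Cross i b :: v) os - 2 * crossing_sign (u ++ Cross i b :: v) os (size u).
Proof.
rewrite /writhe !size_cat.
have lt_u : (size u < size u + size (Cross i b :: v))%N by rewrite -addn1 leq_add2l.
rewrite (bigD1 (Ordinal lt_u)) // [in RHS](bigD1 (Ordinal lt_u)) //= crossing_sign_flip.
rewrite (eq_bigr (fun k : 'I_ _ => crossing_sign (u ++ Cross i b :: v) os k)); first ring.
by move=> k nk; rewrite /crossing_sign (@nth_cat_cons_neq _ _ _ _ (Cross i b)).
Qed.

Theorem mainTheorem5 (S : seq slice) (os : seq (seq bool)) :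
  is_tangle S ->
  link_orientation (numer (tsum S tone)) os ->
  crossing_sign (numer (tsum S tone)) os (size S).+2 = -1 ->
  jones (numer (tsum S tone)) os = jones (numer (tsum S tmone)) os ->
  alpha S = 0 /\ bracket (numer (tsum S tone)) = - A ^- 3 * beta S.
Proof.
(* Only the sign of the crossing coming from [1] matters, not the orientation itself. *)
move=> tS _ sign_neg.
have writhe_mone : writhe (numer (tsum S tmone)) os = writhe (numer (tsum S tone)) os + 2.
  move: sign_neg; rewrite !numer_tsum_cross (writhe_flip _ _ _ false) => ->.
  by rewrite mulrN1 opprK.
rewrite /jones writhe_mone /tone /tmone.
rewrite (bracket_numer_cross false tS) (bracket_numer_cross true tS).
move=> /(alpha0_of_equal_jones A_neq0 A_exp12_neq1) alpha0.
by rewrite alpha0 mulr0 sub0r mulNr.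
Qed.
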